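(* Assume (F1)–(F3) and let $\tau\ge0$, $c\in\mathbb R$. Let $w\in C^2(\mathbb R)$ be a monotonically decreasing solution of $w''(x)+cw'(x)+w(x)\big(1-w(x)-f(w(x+c\tau))\big)=0$ on $\mathbb R$. If $w(-\infty)=w_0$ and $w(+\infty)=0$, then $c<0$. If $w(-\infty)=1$ and $w(+\infty)=w_0$, then $c>0$.
   Context: $f:\mathbb R\to\mathbb R$ is $C^4$ with bounded derivatives and satisfies: (F1) $f(w)>0$ for $0\le w<1$, $f(1)=0$, $f'(1)>-1$; (F2) $f(0)>1$, $f'(0)>0$, and $f(w)>1$ for $0\le w<w_*$ for some $w_*\in(0,1)$; (F3) the equation $f(w)=1-w$ has exactly one solution $w_0$ in $(0,1)$, and $f'(w_0)<-1$; hence $f(w)>1-w$ for $0\le w<w_0$ and $f(w)<1-w$ for $w_0<w<1$. *)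

From Stdlib Require Import Reals Lra.
Open Scope R_scope.

Definition C4_bounded_derivs (f f1 f2 f3 f4 : R -> R) : Prop :=
  (forall x, derivable_pt_lim f x (f1 x)) /\
  (forall x, derivable_pt_lim f1 x (f2 x)) /\
  (forall x, derivable_pt_lim f2 x (f3 x)) /\
  (forall x, derivable_pt_lim f3 x (f4 x)) /\
  continuity f4 /\
  (exists B, forall x,
      Rabs (f1 x) <= B /\ Rabs (f2 x) <= B /\ Rabs (f3 x) <= B /\ Rabs (f4 x) <= B).

Definition C2_with (w w1 w2 : R -> R) : Prop :=
  (forall x, derivable_pt_lim w x (w1 x)) /\
  (forall x, derivable_pt_lim w1 x (w2 x)) /\
  continuity w2.

Definition lim_minus_infty (w : R -> R) (L : R) : Prop :=
  forall eps, eps > 0 -> exists M, forall x, x <= M -> Rabs (w x - L) < eps.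

Definition lim_plus_infty (w : R -> R) (L : R) : Prop :=
  forall eps, eps > 0 -> exists M, forall x, x >= M -> Rabs (w x - L) < eps.

Definition decreasing_fun (w : R -> R) : Prop :=
  forall x y, x <= y -> w y <= w x.

(* Put flux x := w' x + c w x. Along the equation,
   flux' = w'' + c w' = - w (1 - w - f (w (x + c tau))).
   If c had the wrong sign, w (x + c tau) would lie between w x and the limit of w on the
   side of the shift, and (F1)-(F3) then fix the sign of flux' everywhere: the flux is
   monotone. Since w' is small somewhere near the end where w tends to its limit L, the
   flux comes close to c L there, while w' <= 0 bounds it by c L from the other side; hence
   the flux is the constant c L and flux' = 0. At a point where w lies strictly between its
   limits the reaction term is nonzero, a contradiction. *)

From Stdlib Require Import Reals Lra Psatz.
Open Scope R_scope.

Definition derivable_of_pt_lim (F F' : R -> R)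
  (H : forall x, derivable_pt_lim F x (F' x)) : derivable F :=
  fun x => exist _ (F' x) (H x).

Lemma continuity_of_pt_lim (F F' : R -> R) :
  (forall x, derivable_pt_lim F x (F' x)) -> continuity F.
Proof. intro H. exact (derivable_continuous F (derivable_of_pt_lim F F' H)). Qed.

Lemma increasing_of_derivative_nonneg (F F' : R -> R) :
  (forall x, derivable_pt_lim F x (F' x)) -> (forall x, 0 <= F' x) -> increasing F.
Proof. intros H Hpos. exact (nonneg_derivative_1 F (derivable_of_pt_lim F F' H) Hpos). Qed.

Lemma decreasing_of_derivative_nonpos (F F' : R -> R) :
  (forall x, derivable_pt_lim F x (F' x)) -> (forall x, F' x <= 0) -> decreasing F.
Proof. intros H Hneg. exact (nonpos_derivative_1 F (derivable_of_pt_lim F F' H) Hneg). Qed.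

Lemma derivative_nonpos_of_decreasing (F F' : R -> R) :
  (forall x, derivable_pt_lim F x (F' x)) -> decreasing F -> forall x, F' x <= 0.
Proof. intros H Hdec. exact (nonpos_derivative_0 F (derivable_of_pt_lim F F' H) Hdec). Qed.

Lemma derivative_of_constant_eq0 (F : R -> R) (k x l : R) :
  (forall y, F y = k) -> derivable_pt_lim F x l -> l = 0.
Proof.
  intros Hk HF. apply (uniqueness_limite (fun _ => k) x).
  - exact (derivable_pt_lim_ext F _ x l Hk HF).
  - apply derivable_pt_lim_const.
Qed.

Lemma no_root_same_sign (g : R -> R) (s t : R) :
  continuity g -> s <= t -> (forall z, s <= z <= t -> g z <> 0) -> 0 < g s * g t.
Proof.
  intros Hg Hst Hroot. apply Rnot_le_lt. intro Hsign.
  destruct (IVT_cor g s t Hg Hst Hsign) as [z [Hz Hgz]].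
  exact (Hroot z Hz Hgz).
Qed.

Lemma decreasing_le_lim_minus_infty (w : R -> R) (L : R) :
  decreasing w -> lim_minus_infty w L -> forall x, w x <= L.
Proof.
  intros Hdec Hlim x. apply Rnot_lt_le. intro HL.
  destruct (Hlim (w x - L) ltac:(lra)) as [M HM].
  specialize (HM (Rmin M x) (Rmin_l _ _)). specialize (Hdec (Rmin M x) x (Rmin_r _ _)).
  apply Rabs_def2 in HM. lra.
Qed.

Lemma decreasing_ge_lim_plus_infty (w : R -> R) (L : R) :
  decreasing w -> lim_plus_infty w L -> forall x, L <= w x.
Proof.
  intros Hdec Hlim x. apply Rnot_lt_le. intro HL.
  destruct (Hlim (L - w x) ltac:(lra)) as [M HM].
  specialize (HM (Rmax M x) (Rle_ge _ _ (Rmax_l _ _))). specialize (Hdec x (Rmax M x) (Rmax_r _ _)).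
  apply Rabs_def2 in HM. lra.
Qed.

Lemma intermediate_value_between_limits (w : R -> R) (A B m : R) :
  continuity w -> lim_minus_infty w A -> lim_plus_infty w B -> B < m < A ->
  exists x, w x = m.
Proof.
  intros Hc HA HB Hm.
  destruct (HA (A - m) ltac:(lra)) as [M1 H1]. specialize (H1 M1 (Rle_refl _)).
  destruct (HB (m - B) ltac:(lra)) as [M2 H2].
  specialize (H2 (Rmax (M1 + 1) M2) (Rle_ge _ _ (Rmax_r _ _))).
  apply Rabs_def2 in H1. apply Rabs_def2 in H2.
  destruct (IVT_cor (fun t => w t - m) M1 (Rmax (M1 + 1) M2)) as [z [_ Hz]].
  - apply continuity_minus; [exact Hc | apply continuity_const; intros ? ?; reflexivity].
  - pose proof (Rmax_l (M1 + 1) M2). lra.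
  - simpl. nra.
  - exists z. simpl in Hz. lra.
Qed.

(* The mean value theorem on a unit interval inside the region where w is eps/2-close to L. *)
Lemma flat_point_minus_infty (w w1 : R -> R) (L : R) :
  (forall x, derivable_pt_lim w x (w1 x)) -> lim_minus_infty w L ->
  forall eps x, 0 < eps -> exists a, a <= x /\ Rabs (w1 a) < eps /\ Rabs (w a - L) < eps.
Proof.
  intros Hw Hlim eps x Heps. destruct (Hlim (eps / 2) ltac:(lra)) as [M HM].
  pose proof (Rmin_l M x). pose proof (Rmin_r M x). set (b := Rmin M x) in *.
  destruct (MVT_cor2 w w1 (b - 1) b ltac:(lra) (fun t _ => Hw t)) as [a [Ha Hab]].
  pose proof (HM b ltac:(lra)) as Hb. pose proof (HM (b - 1) ltac:(lra)) as Hb1.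
  pose proof (HM a ltac:(lra)) as Hwa.
  apply Rabs_def2 in Hb. apply Rabs_def2 in Hb1. apply Rabs_def2 in Hwa.
  replace (b - (b - 1)) with 1 in Ha by ring.
  exists a. repeat split; try lra; apply Rabs_def1; lra.
Qed.

Lemma flat_point_plus_infty (w w1 : R -> R) (L : R) :
  (forall x, derivable_pt_lim w x (w1 x)) -> lim_plus_infty w L ->
  forall eps x, 0 < eps -> exists a, x <= a /\ Rabs (w1 a) < eps /\ Rabs (w a - L) < eps.
Proof.
  intros Hw Hlim eps x Heps. destruct (Hlim (eps / 2) ltac:(lra)) as [M HM].
  pose proof (Rmax_l M x). pose proof (Rmax_r M x). set (b := Rmax M x) in *.
  destruct (MVT_cor2 w w1 b (b + 1) ltac:(lra) (fun t _ => Hw t)) as [a [Ha Hab]].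
  pose proof (HM b ltac:(lra)) as Hb. pose proof (HM (b + 1) ltac:(lra)) as Hb1.
  pose proof (HM a ltac:(lra)) as Hwa.
  apply Rabs_def2 in Hb. apply Rabs_def2 in Hb1. apply Rabs_def2 in Hwa.
  replace (b + 1 - b) with 1 in Ha by ring.
  exists a. repeat split; try lra; apply Rabs_def1; lra.
Qed.

Definition flux (w w1 : R -> R) (c x : R) : R := w1 x + c * w x.

Lemma flux_derivative (w w1 w2 : R -> R) (c : R) :
  (forall x, derivable_pt_lim w x (w1 x)) -> (forall x, derivable_pt_lim w1 x (w2 x)) ->
  forall x, derivable_pt_lim (flux w w1 c) x (w2 x + c * w1 x).
Proof.
  intros Hw Hw1 x. apply derivable_pt_lim_plus; [apply Hw1 |].
  apply derivable_pt_lim_scal, Hw.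
Qed.

Section FluxConstant.

Variables (w w1 : R -> R) (c L : R).
Hypothesis Hw : forall x, derivable_pt_lim w x (w1 x).
Hypothesis Hdec : decreasing w.

Lemma flux_constant_of_increasing :
  lim_minus_infty w L -> 0 <= c -> increasing (flux w w1 c) -> forall x, flux w w1 c x = c * L.
Proof.
  intros Hlim Hc Hinc x. unfold flux in *.
  pose proof (derivative_nonpos_of_decreasing w w1 Hw Hdec x).
  pose proof (decreasing_le_lim_minus_infty w L Hdec Hlim x).
  apply Rle_antisym; [nra |].
  apply Rle_plus_epsilon. intros eps Heps.
  set (d := eps / (1 + c)). assert (Hd : (1 + c) * d = eps) by (unfold d; field; lra).
  assert (Hd0 : 0 < d) by (unfold d; apply Rdiv_lt_0_compat; lra).
  destruct (flat_point_minus_infty w w1 L Hw Hlim d x Hd0) as [a [Hax [Hw1a Hwa]]].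
  pose proof (Hinc a x Hax). apply Rabs_def2 in Hw1a. apply Rabs_def2 in Hwa. nra.
Qed.

Lemma flux_constant_of_decreasing :
  lim_plus_infty w L -> c <= 0 -> decreasing (flux w w1 c) -> forall x, flux w w1 c x = c * L.
Proof.
  intros Hlim Hc Hdecf x. unfold flux in *.
  pose proof (derivative_nonpos_of_decreasing w w1 Hw Hdec x).
  pose proof (decreasing_ge_lim_plus_infty w L Hdec Hlim x).
  apply Rle_antisym; [nra |].
  apply Rle_plus_epsilon. intros eps Heps.
  set (d := eps / (1 - c)). assert (Hd : (1 - c) * d = eps) by (unfold d; field; lra).
  assert (Hd0 : 0 < d) by (unfold d; apply Rdiv_lt_0_compat; lra).
  destruct (flat_point_plus_infty w w1 L Hw Hlim d x Hd0) as [a [Hxa [Hw1a Hwa]]].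
  pose proof (Hdecf x a Hxa). apply Rabs_def2 in Hw1a. apply Rabs_def2 in Hwa. nra.
Qed.

End FluxConstant.

Lemma lt_left_of_pos_derivative (F : R -> R) (x l a : R) :
  derivable_pt_lim F x l -> 0 < l -> a < x -> exists y, a < y < x /\ F y < F x.
Proof.
  intros HF Hl Hax. destruct (HF l Hl) as [[d Hd] Hlim]. simpl in Hlim.
  set (h := - Rmin (d / 2) ((x - a) / 2)).
  pose proof (Rmin_l (d / 2) ((x - a) / 2)). pose proof (Rmin_r (d / 2) ((x - a) / 2)).
  assert (Hh : 0 < Rmin (d / 2) ((x - a) / 2)) by (apply Rmin_glb_lt; lra).
  specialize (Hlim h ltac:(unfold h; lra) ltac:(unfold h; rewrite Rabs_left; lra)).
  set (q := (F (x + h) - F x) / h) in Hlim.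
  assert (Hq : F (x + h) - F x = q * h) by (unfold q; field; unfold h; lra).
  apply Rabs_def2 in Hlim. exists (x + h). unfold h in *. split; [lra | nra].
Qed.

Section ReactionSign.

Variables (f f1 : R -> R) (w0 : R).
Hypothesis Hf : forall v, derivable_pt_lim f v (f1 v).
Hypothesis Hw0 : 0 < w0 < 1.
Hypothesis Hw0eq : f w0 = 1 - w0.
Hypothesis Hw0uniq : forall v, 0 < v < 1 -> f v = 1 - v -> v = w0.

Let g (v : R) : R := f v + v - 1.

Let continuity_g : continuity g.
Proof.
  apply continuity_minus; [apply continuity_plus |].
  - exact (continuity_of_pt_lim f f1 Hf).
  - exact (derivable_continuous id derivable_id).
  - apply continuity_const. intros ? ?. reflexivity.
Qed.

Lemma f_gt_one_minus_below_w0 : f 0 > 1 -> forall v, 0 <= v < w0 -> f v > 1 - v.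
Proof.
  intros Hf0 v Hv.
  assert (Hsign : 0 < g 0 * g v).
  { apply no_root_same_sign; [exact continuity_g | lra |].
    intros z Hz Hgz. unfold g in Hgz. destruct (Req_dec z 0) as [-> | Hz0]; [lra |].
    assert (z = w0) by (apply Hw0uniq; lra). lra. }
  unfold g in Hsign. nra.
Qed.

Lemma f_lt_one_minus_above_w0 : f 1 = 0 -> f1 1 > -1 -> forall v, w0 < v < 1 -> f v < 1 - v.
Proof.
  intros Hf1 Hd1 v Hv.
  assert (Hg' : derivable_pt_lim g 1 (f1 1 + 1 - 0)).
  { apply derivable_pt_lim_minus; [apply derivable_pt_lim_plus |].
    - apply Hf.
    - apply derivable_pt_lim_id.
    - apply derivable_pt_lim_const. }
  destruct (lt_left_of_pos_derivative g 1 _ w0 Hg' ltac:(lra) ltac:(lra)) as [y [Hy Hgy]].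
  assert (Hroot : forall z, w0 < z < 1 -> g z <> 0).
  { intros z Hz Hgz. unfold g in Hgz. assert (z = w0) by (apply Hw0uniq; lra). lra. }
  assert (Hsign : 0 < g v * g y).
  { destruct (Rle_dec v y).
    - apply no_root_same_sign; [exact continuity_g | lra |]. intros z Hz. apply Hroot. lra.
    - rewrite Rmult_comm. apply no_root_same_sign; [exact continuity_g | lra |].
      intros z Hz. apply Hroot. lra. }
  unfold g in *. nra.
Qed.

Lemma reaction_nonpos_below_w0 (u v : R) :
  f 0 > 1 -> 0 <= u <= v -> v <= w0 ->
  v * (1 - v - f u) <= 0 /\ (0 < v < w0 -> v * (1 - v - f u) < 0).
Proof.
  intros Hf0 Hu Hv. destruct (Rlt_dec u w0) as [Huw0 | Huw0].
  - pose proof (f_gt_one_minus_below_w0 Hf0 u ltac:(lra)). split; intros; nra.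
  - assert (u = w0 /\ v = w0) as [-> ->] by lra. rewrite Hw0eq. split; intros; nra.
Qed.

Lemma reaction_nonneg_above_w0 (u v : R) :
  f 1 = 0 -> f1 1 > -1 -> w0 <= v <= u -> u <= 1 ->
  0 <= v * (1 - v - f u) /\ (w0 < v < 1 -> 0 < v * (1 - v - f u)).
Proof.
  intros Hf1 Hd1 Hv Hu. destruct (Req_dec u 1) as [-> | Hu1].
  - rewrite Hf1. split; intros; nra.
  - destruct (Req_dec u w0) as [-> | Huw0].
    + assert (v = w0) as -> by lra. rewrite Hw0eq. split; intros; nra.
    + pose proof (f_lt_one_minus_above_w0 Hf1 Hd1 u ltac:(lra)). split; intros; nra.
Qed.

End ReactionSign.

Section TravelingFront.

Variables (f f1 : R -> R) (w0 tau c : R) (w w1 w2 : R -> R).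
Hypothesis Hf : forall v, derivable_pt_lim f v (f1 v).
Hypothesis Hw0 : 0 < w0 < 1.
Hypothesis Hw0eq : f w0 = 1 - w0.
Hypothesis Hw0uniq : forall v, 0 < v < 1 -> f v = 1 - v -> v = w0.
Hypothesis Htau : 0 <= tau.
Hypothesis Hw : forall x, derivable_pt_lim w x (w1 x).
Hypothesis Hw1 : forall x, derivable_pt_lim w1 x (w2 x).
Hypothesis Hdec : decreasing w.
Hypothesis Heq : forall x, w2 x + c * w1 x + w x * (1 - w x - f (w (x + c * tau))) = 0.

Let Hflux := flux_derivative w w1 w2 c Hw Hw1.

Lemma speed_neg_of_front_w0_to_0 :
  f 0 > 1 -> lim_minus_infty w w0 -> lim_plus_infty w 0 -> c < 0.
Proof.
  intros Hf0 Hm Hp. apply Rnot_le_lt. intro Hc.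
  assert (Hreact : forall x, w x * (1 - w x - f (w (x + c * tau))) <= 0 /\
                     (0 < w x < w0 -> w x * (1 - w x - f (w (x + c * tau))) < 0)).
  { intro x. apply (reaction_nonpos_below_w0 f f1 w0 Hf Hw0 Hw0eq Hw0uniq); [exact Hf0 | |].
    - split; [exact (decreasing_ge_lim_plus_infty w 0 Hdec Hp _) |]. apply Hdec. nra.
    - exact (decreasing_le_lim_minus_infty w w0 Hdec Hm x). }
  assert (Hinc : increasing (flux w w1 c)).
  { apply (increasing_of_derivative_nonneg _ _ Hflux). intro x.
    pose proof (Heq x). pose proof (proj1 (Hreact x)). lra. }
  pose proof (flux_constant_of_increasing w w1 c w0 Hw Hdec Hm Hc Hinc) as Hconst.
  destruct (intermediate_value_between_limits w w0 0 (w0 / 2)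
              (continuity_of_pt_lim w w1 Hw) Hm Hp ltac:(lra)) as [x Hx].
  pose proof (derivative_of_constant_eq0 _ _ x _ Hconst (Hflux x)).
  pose proof (Heq x). pose proof (proj2 (Hreact x) ltac:(lra)). lra.
Qed.

Lemma speed_pos_of_front_1_to_w0 :
  f 1 = 0 -> f1 1 > -1 -> lim_minus_infty w 1 -> lim_plus_infty w w0 -> 0 < c.
Proof.
  intros Hf1 Hd1 Hm Hp. apply Rnot_le_lt. intro Hc.
  assert (Hreact : forall x, 0 <= w x * (1 - w x - f (w (x + c * tau))) /\
                     (w0 < w x < 1 -> 0 < w x * (1 - w x - f (w (x + c * tau))))).
  { intro x. apply (reaction_nonneg_above_w0 f f1 w0 Hf Hw0 Hw0eq Hw0uniq); try assumption.
    - split; [exact (decreasing_ge_lim_plus_infty w w0 Hdec Hp x) |]. apply Hdec. nra.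
    - exact (decreasing_le_lim_minus_infty w 1 Hdec Hm _). }
  assert (Hdecf : decreasing (flux w w1 c)).
  { apply (decreasing_of_derivative_nonpos _ _ Hflux). intro x.
    pose proof (Heq x). pose proof (proj1 (Hreact x)). lra. }
  pose proof (flux_constant_of_decreasing w w1 c w0 Hw Hdec Hp Hc Hdecf) as Hconst.
  destruct (intermediate_value_between_limits w 1 w0 ((w0 + 1) / 2)
              (continuity_of_pt_lim w w1 Hw) Hm Hp ltac:(lra)) as [x Hx].
  pose proof (derivative_of_constant_eq0 _ _ x _ Hconst (Hflux x)).
  pose proof (Heq x). pose proof (proj2 (Hreact x) ltac:(lra)). lra.
Qed.

End TravelingFront.

Theorem lemma4p3
  (f f1 f2 f3 f4 : R -> R)
  (Hf : C4_bounded_derivs f f1 f2 f3 f4)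
  (F1a : forall v, 0 <= v < 1 -> f v > 0)
  (F1b : f 1 = 0)
  (F1c : f1 1 > -1)
  (F2a : f 0 > 1)
  (F2b : f1 0 > 0)
  (F2c : exists ws, 0 < ws < 1 /\ forall v, 0 <= v < ws -> f v > 1)
  (w0 : R)
  (Hw0 : 0 < w0 < 1)
  (Hw0eq : f w0 = 1 - w0)
  (Hw0uniq : forall v, 0 < v < 1 -> f v = 1 - v -> v = w0)
  (Hw0der : f1 w0 < -1)
  (tau c : R) (Htau : 0 <= tau)
  (w w1 w2 : R -> R)
  (Hw : C2_with w w1 w2)
  (Hdec : decreasing_fun w)
  (Heq : forall x, w2 x + c * w1 x + w x * (1 - w x - f (w (x + c * tau))) = 0) :
  (lim_minus_infty w w0 -> lim_plus_infty w 0 -> c < 0) /\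
  (lim_minus_infty w 1 -> lim_plus_infty w w0 -> c > 0).
Proof.
  destruct Hf as [Hfd _]. destruct Hw as [Hwd [Hw1d _]]. split.
  - exact (speed_neg_of_front_w0_to_0 f f1 w0 tau c w w1 w2
             Hfd Hw0 Hw0eq Hw0uniq Htau Hwd Hw1d Hdec Heq F2a).
  - exact (speed_pos_of_front_1_to_w0 f f1 w0 tau c w w1 w2
             Hfd Hw0 Hw0eq Hw0uniq Htau Hwd Hw1d Hdec Heq F1b F1c).
Qed.
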